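(* Let $T$ be a continuous linear operator on a real or complex separable infinite-dimensional F-space $X$, and let $x$ be a recurrent vector of $T$. Then $x\in\mathrm{span}(\mathcal{E}(T))$ if and only if $\mathrm{span}\{T^nx:n\geq0\}$ is finite-dimensional. Consequently, for every Furstenberg family $\mathcal{F}$ with $\mathcal{F}\mathrm{Rec}(T)\setminus\mathrm{span}(\mathcal{E}(T))\neq\varnothing$, there exists an infinite-dimensional $T$-invariant vector subspace $Z\subset X$ with $Z^N\subset\mathcal{F}\mathrm{Rec}(T_{(N)})$ for every $N\in\mathbb{N}$.
   Context: $x$ is recurrent if $x\in\overline{\{T^nx:n\geq1\}}$. If $X$ is complex, $\mathcal{E}(T)=\{x\neq0: Tx=\lambda x \text{ for some } \lambda\in\mathbb{C},|\lambda|=1\}$ (unimodular eigenvectors). If $X$ is real, let $\widetilde X=\{x+iy:x,y\in X\}\cong X\oplus X$ with complex scalar multiplication $(\alpha+i\beta)(x+iy)=(\alpha x-\beta y)+i(\alpha y+\beta x)$ and $\widetilde T(x+iy)=Tx+iTy$; then $\mathcal{E}(T)=\{x\in X:\exists y\in X,\ x+iy\in\mathcal{E}(\widetilde T)\}$. A Furstenberg family is a collection $\mathcal{F}$ of infinite subsets of $\mathbb{N}_0$, closed under supersets, with $A\cap[n,\infty)\in\mathcal{F}$ whenever $A\in\mathcal{F}$, $n\in\mathbb{N}$. $\mathcal{F}\mathrm{Rec}(S)$ is the set of $y$ such that $\{n\geq0:S^ny\in U\}\in\mathcal{F}$ for every neighbourhood $U$ of $y$. $T_{(N)}=T\oplus\cdots\oplus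 T$ on $X^N$. *)

From HB Require Import structures.
From mathcomp Require Import all_boot all_order all_algebra.
From mathcomp Require Import all_classical all_reals all_analysis.
From mathcomp Require Export complex.
Set Implicit Arguments. Unset Strict Implicit. Unset Printing Implicit Defensive.
Import Order.TTheory GRing.Theory Num.Theory.
Local Open Scope classical_set_scope.
Local Open Scope ring_scope.

Definition spanS (K : numDomainType) (X : lmodType K) (A : set X) : set X :=
  [set x | exists (n : nat) (c : 'I_n -> K) (v : 'I_n -> X),
      (forall i, A (v i)) /\ x = \sum_(i < n) c i *: v i].

Definition finite_dim (K : numDomainType) (X : lmodType K) (V : set X) : Prop :=
  exists (n : nat) (v : 'I_n -> X), V `<=` spanS (range v).

Definition subspace (K : numDomainType) (X : lmodType K) (Z : set X) : Prop :=
  Z 0 /\ (forall x y, Z x -> Z y -> Z (x + y)) /\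
  (forall (a : K) x, Z x -> Z (a *: x)).

Definition Fspace (R : realType) (K : numFieldType) (X : topologicalLmodType K)
  : Prop :=
  exists d : X -> X -> R,
    (forall x y, 0 <= d x y) /\ (forall x y, d x y = 0 <-> x = y) /\
    (forall x y, d x y = d y x) /\
    (forall x y z, d x z <= d x y + d y z) /\
    (forall x y z, d (x + z) (y + z) = d x y) /\
    (forall (x : X) (A : set X),
        nbhs x A <-> exists2 e : R, 0 < e & [set y | d x y < e] `<=` A) /\
    (forall u : nat -> X,
        (forall e : R, 0 < e -> exists N : nat, forall m n : nat,
            (N <= m)%N -> (N <= n)%N -> d (u m) (u n) < e) ->
        exists l : X, u @ \oo --> l).

Definition separable (T : topologicalType) : Prop :=
  exists D : set T, countable D /\ dense D.

Definition recurrent (T : topologicalType) (f : T -> T) (x : T) : Prop :=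
  closure (range (fun n : nat => iter n.+1 f x)) x.

Definition furstenberg (F : set (set nat)) : Prop :=
  (forall A, F A -> infinite_set A) /\
  (forall A B, F A -> A `<=` B -> F B) /\
  (forall A (n : nat), F A -> (0 < n)%N -> F (A `&` [set k | (n <= k)%N])).

Definition FRec (T : topologicalType) (F : set (set nat)) (f : T -> T) : set T :=
  [set y | forall U, nbhs y U -> F [set n | U (iter n f y)]].

Definition opN (X : topologicalType) (N : nat) (f : X -> X) :
  {ptws 'I_N -> X} -> {ptws 'I_N -> X} :=
  fun z => fun i => f (z i).
Arguments opN {X} N f.

Definition EigC (K : numFieldType) (X : lmodType K) (T : X -> X) : set X :=
  [set x | x != 0 /\ exists l : K, `|l| = 1 /\ T x = l *: x].

(** Unimodular eigenvectors, real case, via the complexification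
    X~ = X (+) iX, T~(x+iy) = Tx + iTy, (a+ib)(x+iy) = (ax-by) + i(ay+bx):
    x in E(T) iff exists y, x+iy <> 0 and T~(x+iy) = (a+ib)(x+iy), a^2+b^2=1. *)
Definition EigR (R : realType) (X : lmodType R) (T : X -> X) : set X :=
  [set x | exists (y : X) (a b : R),
      a ^+ 2 + b ^+ 2 = 1 /\ (x != 0 \/ y != 0) /\
      T x = a *: x - b *: y /\ T y = a *: y + b *: x].

Definition thm15_conclusion (K : numFieldType) (X : topologicalLmodType K)
  (T : X -> X) (E : set X) : Prop :=
  (forall x : X, recurrent T x ->
     (spanS E x <-> finite_dim (spanS (range (fun n : nat => iter n T x))))) /\
  (forall F : set (set nat), furstenberg F ->
     FRec F T `\` spanS E !=set0 ->
     exists Z : set X, subspace Z /\ T @` Z `<=` Z /\ ~ finite_dim Z /\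
       forall N : nat, (0 < N)%N ->
         [set z : {ptws 'I_N -> X} | forall i, Z (z i)] `<=` FRec F (opN N T)).

From Pilot Require Import Defs.
From HB Require Import structures.
From mathcomp Require Import all_boot all_order all_algebra.
From mathcomp Require Import all_classical all_reals all_analysis.
From mathcomp Require Import complex.
From mathcomp Require Import ring zify.
Import Order.TTheory GRing.Theory Num.Theory.
Import numFieldTopology.Exports.
Local Open Scope classical_set_scope.
Local Open Scope ring_scope.
Set Implicit Arguments. Unset Strict Implicit. Unset Printing Implicit Defensive.

(* If the orbit of a vector y under S spans a finite-dimensional space, y has a
   minimal annihilating polynomial p = prod_k ('X - l_k).  The return times of a
   recurrent y to its neighbourhoods form a proper filter along which S^n y
   tends to y, hence q(S) S^n y = S^n q(S) y tends to q(S) y for every q.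
   Applied to the cofactor q of a root l, this makes l unimodular; applied to
   the cofactor of a double root, it would make a Jordan chain, along which
   S^n grows linearly, return to itself, which is impossible.  So the roots are
   simple and unimodular, and Lagrange interpolation writes y as a sum of
   eigenvectors q_k(S) y.  Real spaces are handled through the
   complexification X + iX, whose eigenvectors have real and imaginary parts
   in E(T).  For the second assertion, an F-recurrent vector y outside
   span E(T) has an infinite-dimensional orbit, and its cyclic subspace
   {q(T) y} works: (q_i(T) y)_i is the image of y under a continuous map
   intertwining T with T_(N). *)

Section TopologicalModuleCvg.
Context {K : numFieldType} {X : topologicalLmodType K}.
Context {T : Type} {F : set_system T} {FF : Filter F}.

Lemma tmod_cvgD (f g : T -> X) (a b : X) :
  f @ F --> a -> g @ F --> b -> (fun t => f t + g t) @ F --> a + b.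
Proof. exact: continuous2_cvg (add_continuous (a, b)). Qed.

Lemma tmod_cvgN (f : T -> X) (a : X) : f @ F --> a -> (fun t => - f t) @ F --> - a.
Proof. by move=> fa; apply: continuous_cvg fa; exact: opp_continuous. Qed.

Lemma tmod_cvgB (f g : T -> X) (a b : X) :
  f @ F --> a -> g @ F --> b -> (fun t => f t - g t) @ F --> a - b.
Proof. by move=> fa /tmod_cvgN; exact: tmod_cvgD. Qed.

Lemma tmod_cvgZ (mu : T -> K) (f : T -> X) (m : K) (a : X) :
  mu @ F --> m -> f @ F --> a -> (fun t => mu t *: f t) @ F --> m *: a.
Proof.
move=> mum fa.
apply: (cvg_comp (fun t => ((mu t : K^o), f t)) _ _ (scale_continuous (_, _))).
exact: (cvg_pair (G := nbhs (m : K^o)) mum fa).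
Qed.

Lemma tmod_cvg_sum n (f : 'I_n -> T -> X) (a : 'I_n -> X) :
  (forall i, f i @ F --> a i) ->
  (fun t => \sum_(i < n) f i t) @ F --> \sum_(i < n) a i.
Proof.
elim: n f a => [|n IH] f a fa.
  by rewrite big_ord0; under eq_fun do rewrite big_ord0; exact: cvg_cst.
rewrite big_ord_recr; under eq_fun do rewrite big_ord_recr.
by apply: tmod_cvgD; [apply: IH => i|]; exact: fa.
Qed.

(* Scaling is continuous at (0, 0); writing mu t *: f t = (mu t / c) *: (c *: f t)
   with c = 2 / e keeps the scalar in the e-ball. *)
Lemma tmod_cvgZ_bounded (mu : T -> K) (f : T -> X) :
  (forall t, `|mu t| <= 1) -> f @ F --> 0 -> (fun t => mu t *: f t) @ F --> 0.
Proof.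
move=> mu_le1 f0 W.
rewrite -[X in nbhs X](scale0r (0 : X)).
move=> /(scale_continuous ((0 : K^o), (0 : X))) [[A B] /= [hA hB] hAB].
have [e e0 eA] := iffLR (nbhs_ballP _ _) hA.
pose c : K := 2 / e.
have c0 : c != 0 by rewrite mulf_neq0 ?invr_eq0 ?pnatr_eq0 ?gt_eqF.
have cf0 : (fun t => c *: f t) @ F --> 0.
  by rewrite -(scaler0 _ c); apply: tmod_cvgZ => //; exact: cvg_cst.
have /filterS : F [set t | B (c *: f t)] := cf0 B hB; apply => t /= Bt.
have -> : mu t *: f t = (mu t / c) *: (c *: f t) by rewrite scalerA mulrVK ?unitfE.
apply: (hAB (mu t / c, c *: f t)); split => //=; apply: eA.
rewrite /ball /= sub0r normrN normrM normfV [`|c|]gtr0_norm ?divr_gt0 // invf_div.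
apply: le_lt_trans (ler_piMl _ (mu_le1 t)) _; first by rewrite divr_ge0 ?ltW.
by rewrite ltr_pdivrMr // ltr_pMr // ltr1n.
Qed.

End TopologicalModuleCvg.

Lemma ptws_cvg (X : topologicalType) (N : nat) (T : Type) (F : set_system T)
  (FF : Filter F) (f : T -> {ptws 'I_N -> X}) (g : {ptws 'I_N -> X}) :
  (forall i, (fun t => f t i) @ F --> g i) -> f @ F --> g.
Proof.
move=> fg; apply/cvg_sup => i A /= [B [[C oC CB] Bg BA]].
have gC : nbhs (g i) C by apply: open_nbhs_nbhs; split => //; move: Bg; rewrite -CB.
have /filterS : F [set t | C (f t i)] := fg i C gC.
by apply => t Ct; apply: BA; rewrite -CB.
Qed.

Section ComplexScalars.
Variable R : realType.
Local Notation C := R[i].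
Local Open Scope complex_scope.

Lemma cvgC0_bounded (T : Type) (F : set_system T) (FF : Filter F)
  (mu : T -> C) (r : T -> R) :
  (forall t, `|mu t| <= (r t)%:C) -> r @ F --> 0 -> (mu : T -> C^o) @ F --> 0.
Proof.
move=> mur r0; apply/cvgr0Pnorm_lt => e e0.
have [e' ee'] : exists e' : R, e = e'%:C.
  by apply/complex_realP; rewrite realE ltW.
rewrite {}ee' ltcR in e0 *; near=> t; apply: (le_lt_trans (mur t)); rewrite ltcR.
by apply: le_lt_trans (ler_norm _) _; near: t; exact: cvgr0_norm_lt.
Unshelve. all: by end_near.
Qed.

Lemma cvgC_expr (l : C) : `|l| < 1 -> (fun n => l ^+ n : C^o) @ \oo --> 0.
Proof.
have [r er] : exists r : R, `|l| = r%:C by apply/complex_realP; exact: normr_real.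
rewrite er ltcR => r1.
apply: (@cvgC0_bounded _ _ _ _ (fun n => r ^+ n)).
  by move=> n; rewrite normrX er rmorphXn.
by apply: cvg_expr; rewrite ger0_norm // -ler0c -er.
Qed.

Lemma cvgC_harmonic : (fun n => (n.+1%:R : C)^-1 : C^o) @ \oo --> 0.
Proof.
apply: (@cvgC0_bounded _ _ _ _ (fun n => (n.+1%:R : R)^-1)); last first.
  exact: cvg_harmonic.
by move=> n; rewrite normfV normr_nat rmorphV ?unitfE ?pnatr_eq0 // rmorph_nat.
Qed.

Lemma complex_part_continuous (f : C -> R) :
  (forall z w, `|f z - f w|%:C <= `|z - w|) -> continuous (f : C^o -> R^o).
Proof.
move=> f_lip z; apply/(cvgrPdist_lt (FF := nbhs_filter (z : C^o))) => e e0.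
exists e%:C => /= [|w zw]; first by rewrite ltcR.
by rewrite -ltcR; exact: le_lt_trans (f_lip z w) zw.
Qed.

Lemma Re_continuous : continuous (fun z : C^o => (complex.Re z : R^o)).
Proof.
apply: complex_part_continuous => -[a b] [c d].
exact: (normc_ge_Re (a +i* b - c +i* d)).
Qed.

Lemma Im_continuous : continuous (fun z : C^o => (complex.Im z : R^o)).
Proof.
apply: complex_part_continuous => -[a b] [c d].
have := normc_ge_Re ((a +i* b - c +i* d) * 'i%C).
by rewrite ReiNIm normrN normrM complexiE normCi mulr1.
Qed.

End ComplexScalars.

Section OperatorPolynomial.
Variables (K : numFieldType) (X : lmodType K) (T : {linear X -> X}).
Implicit Types (p q : {poly K}) (x : X).

Definition papply p x : X := \sum_(i < size p) p`_i *: iter i T x.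

Lemma papplyE n p x : (size p <= n)%N ->
  papply p x = \sum_(i < n) p`_i *: iter i T x.
Proof.
move=> pn; rewrite /papply (big_ord_widen n (fun i => p`_i *: iter i T x) pn).
rewrite big_mkcond /=; apply: eq_bigr => i _; case: ifPn => //.
by rewrite -leqNgt => ip; rewrite nth_default // scale0r.
Qed.

Lemma papply0 x : papply 0 x = 0.
Proof. by rewrite /papply size_poly0 big_ord0. Qed.

Lemma papplyD p q x : papply (p + q) x = papply p x + papply q x.
Proof.
rewrite !(papplyE (n := size p + size q)) ?leq_addr ?leq_addl //; last first.
  by apply: leq_trans (size_polyD _ _) _; rewrite geq_max leq_addr leq_addl.
by rewrite -big_split; apply: eq_bigr => i _; rewrite coefD scalerDl.
Qed.

Lemma papplyZ c p x : papply (c *: p) x = c *: papply p x.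
Proof.
rewrite !(papplyE (n := size p)) ?size_scale_leq // scaler_sumr.
by apply: eq_bigr => i _; rewrite coefZ scalerA.
Qed.

Lemma papply_sum (I : Type) (r : seq I) (P : pred I) (F : I -> {poly K}) x :
  papply (\sum_(i <- r | P i) F i) x = \sum_(i <- r | P i) papply (F i) x.
Proof. exact: (big_morph (papply^~ x) (fun p q => papplyD p q x) (papply0 x)). Qed.

Lemma papplyC c x : papply c%:P x = c *: x.
Proof. by rewrite (papplyE (n := 1)) ?size_polyC_leq1 // big_ord1 coefC. Qed.

Lemma papply1 x : papply 1 x = x.
Proof. by rewrite papplyC scale1r. Qed.

Lemma papply_comm p x : T (papply p x) = papply p (T x).
Proof.
rewrite /papply linear_sum; apply: eq_bigr => i _.
by rewrite linearZ /= -iterS iterSr.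
Qed.

Lemma papplyMX p x : papply (p * 'X) x = papply p (T x).
Proof.
rewrite (papplyE (n := (size p).+1)); last first.
  by apply: leq_trans (size_polyMleq _ _) _; rewrite size_polyX addn2.
rewrite big_ord_recl coefMX eqxx scale0r add0r /papply.
by apply: eq_bigr => i _; rewrite coefMX /= -iterS iterSr.
Qed.

Lemma papplyXM p x : papply ('X * p) x = T (papply p x).
Proof. by rewrite mulrC papplyMX papply_comm. Qed.

Lemma papplyM p q x : papply (p * q) x = papply p (papply q x).
Proof.
elim/poly_ind: p q => [|p c IH] q; first by rewrite mul0r !papply0.
by rewrite mulrDl -mulrA mul_polyC !papplyD papplyZ IH papplyXM papplyMX papplyC.
Qed.

Lemma papplyXnM n p x : papply ('X^n * p) x = iter n T (papply p x).
Proof.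
elim: n => [|n IH]; first by rewrite expr0 mul1r.
by rewrite exprS -mulrA papplyXM IH.
Qed.

Lemma papply_iter n p x : papply p (iter n T x) = iter n T (papply p x).
Proof.
by rewrite -papplyXnM mulrC papplyM -{1}[x]papply1 -papplyXnM mulr1.
Qed.

End OperatorPolynomial.

Lemma papply_continuous (K : numFieldType) (X : topologicalLmodType K)
  (T : {linear X -> X}) p : continuous T -> continuous (papply T p).
Proof.
move=> Tc x; apply: (tmod_cvg_sum (f := fun i y => p`_i *: iter i T y)) => i.
apply: tmod_cvgZ; first exact: cvg_cst.
by elim: (nat_of_ord i) => [|n IH] /=; [exact: cvg_id | exact: cvg_comp IH (Tc _)].
Qed.

Definition catf (T : Type) n m (f : 'I_n -> T) (g : 'I_m -> T) (i : 'I_(n + m)) : T :=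
  match fintype.split i with inl j => f j | inr k => g k end.

Lemma catf_lshift (T : Type) n m (f : 'I_n -> T) (g : 'I_m -> T) i :
  catf f g (lshift m i) = f i.
Proof. by rewrite /catf -[lshift _ _]/(unsplit (inl i)) unsplitK. Qed.

Lemma catf_rshift (T : Type) n m (f : 'I_n -> T) (g : 'I_m -> T) i :
  catf f g (rshift n i) = g i.
Proof. by rewrite /catf -[rshift _ _]/(unsplit (inr i)) unsplitK. Qed.

Section Span.
Variables (K : numDomainType) (X : lmodType K).
Implicit Types (A Z : set X).

Lemma spanS_mem A x : A x -> spanS A x.
Proof.
by move=> Ax; exists 1%N, (fun=> 1), (fun=> x); rewrite big_ord1 scale1r.
Qed.

Lemma spanS_subspace A : Defs.subspace (spanS A).
Proof.
split; first by exists 0%N, (fun=> 0), (fun=> 0); rewrite big_ord0; split=> // -[].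
split=> [_ _ [n [c [v [Av ->]]]] [m [d [w [Aw ->]]]] | a _ [n [c [v [Av ->]]]]].
  exists (n + m)%N, (catf c d), (catf v w); split.
    by move=> i; rewrite /catf; case: (fintype.split i).
  by rewrite big_split_ord; congr (_ + _); apply: eq_bigr => i _;
    rewrite ?catf_lshift ?catf_rshift.
exists n, (fun i => a * c i), v; split => //.
by rewrite scaler_sumr; apply: eq_bigr => i _; rewrite scalerA.
Qed.

Lemma subspace_sum Z (I : finType) (P : pred I) (F : I -> X) :
  Defs.subspace Z -> (forall i, P i -> Z (F i)) -> Z (\sum_(i | P i) F i).
Proof. by move=> [Z0 [ZD _]] ZF; apply: big_ind. Qed.

Lemma spanS_sub A Z : Defs.subspace Z -> A `<=` Z -> spanS A `<=` Z.
Proof.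
move=> Zsub AZ _ [n [c [v [Av ->]]]]; apply: subspace_sum => // i _.
by case: Zsub => _ [_ ZZ]; apply/ZZ/AZ.
Qed.

Lemma spanS_range m (v : 'I_m -> X) y :
  spanS (range v) y -> exists a : 'I_m -> K, y = \sum_(k < m) a k *: v k.
Proof.
case=> n [c [w [vw ->]]].
have /choice [g vg] : forall i, exists k, v k = w i.
  by move=> i; have [k _ <-] := vw i; exists k.
exists (fun k => \sum_(i < n | g i == k) c i); rewrite (partition_big g xpredT) //=.
apply: eq_bigr => k _; rewrite scaler_suml; apply: eq_bigr => i /eqP <-.
by rewrite vg.
Qed.

End Span.

Section MinimalPolynomial.
Variables (K : numFieldType) (X : lmodType K) (T : {linear X -> X}) (x : X).
Hypothesis orbit_fin : finite_dim (spanS (range (fun n => iter n T x))).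

(* m + 1 vectors in an m-dimensional span are linearly dependent. *)
Lemma orbit_annihilator : exists2 p : {poly K}, p != 0 & papply T p x = 0.
Proof.
case: orbit_fin => m [v orbit_v].
have /choice [a iter_a] : forall j : 'I_m.+1,
    exists a : 'I_m -> K, iter j T x = \sum_(k < m) a k *: v k.
  by move=> j; apply/spanS_range/orbit_v/spanS_mem; exists (nat_of_ord j).
pose A : 'M[K]_(m.+1, m) := \matrix_(j, k) a j k.
have [u uA u0] : exists2 u : 'rV_m.+1, u *m A = 0 & u != 0.
  apply: contrapT => noker.
  have /negP[] : ~~ row_free A by rewrite -row_leq_rank -ltnNge ltnS rank_leq_col.
  apply: inj_row_free => u uA; apply/eqP; apply: contrapT => /negP u0.
  by apply: noker; exists u.
exists (\poly_(j < m.+1) u 0 (inord j)).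
  apply: contraNneq u0 => /polyP p0; apply/eqP/rowP => j.
  by have := p0 j; rewrite coef_poly ltn_ord inord_val coef0 mxE.
rewrite (@papplyE _ _ T m.+1) ?size_poly //.
under eq_bigr => j _ do rewrite coef_poly ltn_ord inord_val iter_a scaler_sumr.
rewrite exchange_big big1 // => k _ /=.
under eq_bigr => j _ do rewrite scalerA.
rewrite -scaler_suml; suff -> : \sum_(j < m.+1) u 0 j * a j k = 0 by rewrite scale0r.
have := congr1 (fun M : 'rV[K]_m => M 0 k) uA; rewrite !mxE => uAk.
by rewrite -[RHS]uAk; apply: eq_bigr => j _; rewrite mxE.
Qed.

Lemma orbit_minpoly : exists p : {poly K}, [/\ p != 0, papply T p x = 0 &
  forall q, q != 0 -> papply T q x = 0 -> (size p <= size q)%N].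
Proof.
have [p0 p00 p0x] := orbit_annihilator.
pose P n := `[< exists p : {poly K}, [/\ p != 0, papply T p x = 0 & size p = n] >].
have [|n /asboolP [p [p_neq0 px <-]] p_min] := @ex_minnP P.
  by exists (size p0); apply/asboolP; exists p0.
by exists p; split => // q q_neq0 qx; apply/p_min/asboolP; exists q.
Qed.

End MinimalPolynomial.

Definition prod_XsubC_except (K : nzRingType) n (x : 'I_n -> K) (i : 'I_n) :=
  \prod_(j < n | j != i) ('X - (x j)%:P).

(* The right-hand side minus 1 has degree < n and vanishes at the n points. *)
Lemma lagrange_partition1 (K : fieldType) n (x : 'I_n -> K) :
  (0 < n)%N -> injective x ->
  1 = \sum_(i < n) ((prod_XsubC_except x i).[x i])^-1 *: prod_XsubC_except x i.
Proof.
move=> n_gt0 x_inj; set q := prod_XsubC_except x.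
have q_at j k : j != k -> (q j).[x k] = 0.
  move=> jk; rewrite /q /prod_XsubC_except horner_prod (bigD1 k) 1?eq_sym //=.
  by rewrite hornerXsubC subrr mul0r.
have qjj_neq0 j : (q j).[x j] != 0.
  rewrite /q /prod_XsubC_except horner_prod; apply/prodf_neq0 => k kj.
  by rewrite hornerXsubC subr_eq0 (inj_eq x_inj) eq_sym.
have size_q j : (size (q j) <= n)%N.
  rewrite size_prod => [|k _]; last by rewrite polyXsubC_eq0.
  rewrite (eq_bigr (fun=> 2%N)) => [|k _]; last by rewrite size_XsubC.
  by rewrite sum_nat_const cardC1 card_ord; lia.
apply/eqP; rewrite -subr_eq0; apply: contraT; set P := _ - _ => P_neq0.
have P_root k : root P (x k).
  rewrite /root /P hornerD hornerN horner_sum hornerC (bigD1 k) //= big1.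
    by rewrite hornerZ mulVf ?qjj_neq0 // addr0 subrr.
  by move=> j jk; rewrite hornerZ (q_at _ _ jk) mulr0.
have size_P : (size P <= n)%N.
  apply: leq_trans (size_polyD _ _) _; rewrite geq_max size_poly1 n_gt0 size_polyN.
  apply: (big_ind (fun p : {poly K} => size p <= n)%N) => [|p r pn rn|j _].
  - by rewrite size_poly0.
  - by apply: leq_trans (size_polyD _ _) _; rewrite geq_max pn rn.
  - exact: leq_trans (size_scale_leq _ _) (size_q j).
have := max_poly_roots P_neq0 (rs := [seq x k | k <- enum 'I_n]).
rewrite size_map size_enum_ord map_inj_uniq ?enum_uniq //.
have -> : all (root P) [seq x k | k <- enum 'I_n] by apply/allP => _ /mapP [k _ ->].
by move=> /(_ isT isT); rewrite ltnNge size_P.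
Qed.

Lemma iter_semiconj (S T : Type) (f : S -> S) (g : T -> T) (h : S -> T) n x :
  (forall z, h (f z) = g (h z)) -> h (iter n f x) = iter n g (h x).
Proof. by move=> hfg; elim: n => //= n <-; rewrite hfg. Qed.

Lemma recurrent_semiconj (S T : topologicalType) (f : S -> S) (g : T -> T)
  (h : S -> T) x : continuous h -> (forall z, h (f z) = g (h z)) ->
  recurrent f x -> recurrent g (h x).
Proof.
move=> hc hfg x_rec V /hc /x_rec [_ [[n _ <-] /= Vn]].
exists (h (iter n.+1 f x)); split => //.
by exists n => //; rewrite (iter_semiconj _ _ hfg).
Qed.

Lemma FRec_recurrent (X : topologicalType) (F : set (set nat)) (f : X -> X) y :
  furstenberg F -> FRec F f y -> recurrent f y.
Proof.
move=> [F_inf _] yF U yU; apply: contrapT => noU.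
apply: (F_inf _ (yF U yU)); apply: (sub_finite_set (B := [set 0%N])) => [n /= Un|].
  by apply/eqP; rewrite -leqn0 leqNgt; apply/negP => n_gt0; apply: noU;
    exists (iter n f y); split => //; exists n.-1; rewrite ?prednK.
exact: finite_set1.
Qed.

Section ReturnTimes.
Variables (X : topologicalType) (f : X -> X) (x : X).
Hypotheses (X_acc : accessible_space X) (x_rec : recurrent f x).

(* A periodic point returns at all multiples of its period; otherwise the T1
   property lets us exclude the finitely many earlier iterates one at a time. *)
Lemma recurrent_return U : nbhs x U ->
  forall m, exists2 n, (m <= n)%N & U (iter n f x).
Proof.
move=> xU m; have [[k k_gt0 fkx] | aper] :=
  pselect (exists2 k, (0 < k)%N & iter k f x = x).
  by exists (m * k)%N; rewrite ?leq_pmulr // iterM iter_fix //; exact: nbhs_singleton.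
suff ret m' V : nbhs x V -> exists2 n, (m' < n)%N & V (iter n f x).
  by have [n /ltnW mn Un] := ret m U xU; exists n.
elim: m' V => [|m' IH] V xV.
  by have [_ [[n _ <-] Vn]] := x_rec xV; exists n.+1.
have [W [oW Wx Wm]] : exists W : set X, [/\ open W, x \in W & iter m'.+1 f x \in ~` W].
  by apply: X_acc; apply/eqP => xfm; apply: aper; exists m'.+1 => //; exact: esym.
have xW : nbhs x W by apply: open_nbhs_nbhs; split => //; exact/set_mem.
have [n mn [Vn Wn]] := IH (V `&` W) (filterI xV xW); exists n => //.
rewrite ltn_neqAle mn andbT; apply/eqP => m_eq_n.
by move/set_mem: Wm; apply; rewrite m_eq_n.
Qed.

Definition return_filter : set_system nat :=
  filter_from [set p : set X * nat | nbhs x p.1]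
    (fun p => [set n | (p.2 <= n)%N /\ p.1 (iter n f x)]).

Lemma return_filter_proper : ProperFilter return_filter.
Proof.
apply: filter_from_proper => [|[A a] /= xA]; last first.
  by have [n an An] := recurrent_return xA a; exists n.
apply: filter_from_filter => [|[A a] [B b] /= xA xB].
  by exists (setT, 0%N); exact: filterT.
exists (A `&` B, maxn a b); first exact: filterI.
by move=> n /= [+ [An Bn]]; rewrite geq_max => /andP[an bn].
Qed.

Lemma return_filter_tails : return_filter --> \oo.
Proof.
by move=> A [m _ mA]; exists (setT, m) => /=; [exact: filterT | move=> n [/mA]].
Qed.

Lemma iter_return_cvg : (fun n => iter n f x) @ return_filter --> x.
Proof. by move=> A xA; exists (A, 0%N) => //= n []. Qed.

End ReturnTimes.

Section UnimodularEigen.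
Variables (R : realType) (Y : topologicalLmodType R[i]).
Local Notation C := R[i].
Hypothesis Y_haus : hausdorff_space Y.
Variable G : set_system nat.
Context {G_proper : ProperFilter G}.
Hypothesis G_tails : G --> \oo.

Let cvgG_unique (f : nat -> Y) (a b : Y) : f @ G --> a -> f @ G --> b -> a = b.
Proof. exact: (@cvg_unique _ Y_haus _ (fmap_proper_filter f G_proper)). Qed.

Let cvgG (T : topologicalType) (f : nat -> T) (a : T) : f @ \oo --> a -> f @ G --> a.
Proof. by move=> fa; apply: cvg_trans fa; exact: cvg_app. Qed.

Let cvgG_expr (l : C) : `|l| < 1 -> (fun n => l ^+ n : C^o) @ G --> 0.
Proof. by move=> l1; apply: cvgG; exact: cvgC_expr. Qed.

Lemma recurrent_eigen_unimodular (w : Y) (l : C) :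
  w != 0 -> (fun n => l ^+ n *: w) @ G --> w -> `|l| = 1.
Proof.
move=> w_neq0 lw; apply: contraNeq w_neq0 => l_neq1; apply/eqP.
have [l_lt1 | l_gt1] : `|l| < 1 \/ 1 < `|l|.
  by move: l_neq1; rewrite real_neqr_lt ?normr_real ?real1 // => /orP.
  apply: cvgG_unique lw _; rewrite -(scale0r w).
  by apply: tmod_cvgZ; [exact: cvgG_expr | exact: cvg_cst].
have l_neq0 : l != 0 by rewrite -normr_gt0 (lt_trans ltr01).
have linv0 : (fun n => l^-1 ^+ n : C^o) @ G --> 0.
  by apply: cvgG_expr; rewrite normfV invf_lt1 ?(lt_trans ltr01).
apply: (cvgG_unique (f := fun=> w)); first exact: cvg_cst.
have -> : (fun=> w) = (fun n => l^-1 ^+ n *: (l ^+ n *: w)).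
  by apply/funext => n; rewrite scalerA -exprMn mulVf // expr1n scale1r.
by rewrite -(scale0r w); exact: tmod_cvgZ.
Qed.

(* Dividing the orbit by n + 1 isolates the term l ^+ n *: v, which must then
   tend to 0; as the l ^+ n are unimodular, v = 0. *)
Lemma recurrent_Jordan_chain0 (u v : Y) (l : C) : `|l| = 1 ->
  (fun n => l ^+ n *: u + (n%:R * l ^+ n) *: v) @ G --> u -> v = 0.
Proof.
move=> l1 uv_rec; pose a n : C := (n.+1%:R)^-1.
have a0 : (fun n => a n : C^o) @ G --> 0 by apply: cvgG; exact: cvgC_harmonic.
have aw0 (w : Y) : (fun n => a n *: w) @ G --> 0.
  by rewrite -(scale0r w); exact: tmod_cvgZ a0 (cvg_cst w).
have l_neq0 : l != 0 by rewrite -normr_eq0 l1 oner_eq0.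
have lv0 : (fun n => l ^+ n *: v) @ G --> 0.
  have -> : (fun n => l ^+ n *: v) = (fun n =>
      a n *: (l ^+ n *: u + (n%:R * l ^+ n) *: v)
      - l ^+ n *: (a n *: u) + l ^+ n *: (a n *: v)).
    apply/funext => n; rewrite scalerDr !scalerA (mulrC (l ^+ n)).
    rewrite (addrC ((a n * l ^+ n) *: u)) addrK -scalerDl.
    by congr (_ *: v); rewrite /a -natr1; field; rewrite natr1 pnatr_eq0.
  have -> : (0 : Y) = 0 *: u - 0 + 0 by rewrite scale0r subr0 addr0.
  have l_le1 n : `|l ^+ n| <= 1 by rewrite normrX l1 expr1n.
  exact: tmod_cvgD (tmod_cvgB (tmod_cvgZ a0 uv_rec)
    (tmod_cvgZ_bounded l_le1 (aw0 u))) (tmod_cvgZ_bounded l_le1 (aw0 v)).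
apply: (cvgG_unique (f := fun=> v)); first exact: cvg_cst.
have -> : (fun=> v) = (fun n => l^-1 ^+ n *: (l ^+ n *: v)).
  by apply/funext => n; rewrite scalerA -exprMn mulVf // expr1n scale1r.
have linv_le1 n : `|l^-1 ^+ n| <= 1 by rewrite normrX normfV l1 invr1 expr1n.
exact: tmod_cvgZ_bounded linv_le1 lv0.
Qed.

End UnimodularEigen.

Section JordanChain.
Variables (K : numFieldType) (Y : lmodType K) (S : {linear Y -> Y}).

Lemma iter_eigen (w : Y) (l : K) : S w = l *: w -> forall m, iter m S w = l ^+ m *: w.
Proof.
by move=> Sw; elim=> [|m IH] /=; rewrite ?scale1r // IH linearZZ Sw scalerA exprSr.
Qed.

Lemma iter_Jordan_chain (w v : Y) (l : K) :
  S v = l *: v -> S w = l *: w + l *: v ->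
  forall m, iter m S w = l ^+ m *: w + (m%:R * l ^+ m) *: v.
Proof.
move=> Sv Sw; elim=> [|m IH] /=; first by rewrite scale1r mul0r scale0r addr0.
rewrite IH linearD !linearZZ Sw Sv scalerDr !scalerA -addrA -scalerDl exprSr.
by congr (_ + (_ *: v)); rewrite -natr1; ring.
Qed.

End JordanChain.

Section RecurrentSpectrum.
Variables (R : realType) (Y : topologicalLmodType R[i]) (S : {linear Y -> Y}) (y : Y).
Local Notation C := R[i].
Hypotheses (Y_haus : hausdorff_space Y) (S_cont : continuous S) (y_rec : recurrent S y).
Variables (n : nat) (lam : 'I_n -> C).
Local Notation Pi := (\prod_(k < n) ('X - (lam k)%:P)).
Hypotheses (Pi_y : papply S Pi y = 0)
  (Pi_min : forall q, q != 0 -> papply S q y = 0 -> (size Pi <= size q)%N).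

Let G := return_filter S y.
Let G_proper : ProperFilter G :=
  return_filter_proper (hausdorff_accessible Y_haus) y_rec.

Let papply_return q : (fun m => iter m S (papply S q y)) @ G --> papply S q y.
Proof.
under eq_fun do rewrite -papply_iter.
apply: cvg_comp; [exact: iter_return_cvg | exact: papply_continuous].
Qed.

Lemma minpoly_cofactor_eigen l q : Pi = ('X - l%:P) * q ->
  papply S q y != 0 /\ S (papply S q y) = l *: papply S q y.
Proof.
move=> Pi_lq.
have Pi_neq0 : Pi != 0 by apply/monic_neq0/monic_prod => k _; exact: monicXsubC.
have q_neq0 : q != 0 by apply: contraNneq Pi_neq0 => q0; rewrite Pi_lq q0 mulr0.
split.
  apply/eqP => qy; have := Pi_min q_neq0 qy.
  by rewrite Pi_lq size_mul ?polyXsubC_eq0 // size_XsubC ltnn.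
rewrite -papplyXM (_ : 'X * q = Pi + l *: q) ?papplyD ?Pi_y ?add0r ?papplyZ //.
by rewrite Pi_lq mulrBl -mul_polyC subrK.
Qed.

Lemma minpoly_root_unimodular k : `|lam k| = 1.
Proof.
have [w_neq0 Sw] := minpoly_cofactor_eigen (bigD1 k isT).
apply: (recurrent_eigen_unimodular (G_proper := G_proper) Y_haus
  (return_filter_tails S y) w_neq0).
have := @papply_return (prod_XsubC_except lam k).
by under eq_fun do rewrite (iter_eigen Sw).
Qed.

Lemma minpoly_roots_inj : injective lam.
Proof.
move=> i j lij; apply/eqP/negPn/negP => ij; set l := lam i.
pose q := \prod_(k < n | (k != i) && (k != j)) ('X - (lam k)%:P).
have Pi_l2q : Pi = ('X - l%:P) * (('X - l%:P) * q).
  by rewrite (bigD1 i) // (bigD1 j) 1?eq_sym //= -lij.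
have [w2_neq0 Sw2] := minpoly_cofactor_eigen Pi_l2q.
have l_neq0 : l != 0 by rewrite -normr_eq0 minpoly_root_unimodular oner_eq0.
set w1 := papply S q y; set w2 := papply S (('X - l%:P) * q) y.
have Sw1 : S w1 = l *: w1 + l *: (l^-1 *: w2).
  rewrite scalerA mulfV // scale1r addrC -papplyXM /w2.
  rewrite (_ : 'X * q = ('X - l%:P) * q + l *: q) ?papplyD ?papplyZ //.
  by rewrite mulrBl -mul_polyC subrK.
have Sv : S (l^-1 *: w2) = l *: (l^-1 *: w2) by rewrite linearZZ Sw2 !scalerA mulrC.
have v0 : l^-1 *: w2 = 0.
  apply: (recurrent_Jordan_chain0 (G_proper := G_proper) Y_haus
    (return_filter_tails S y) (u := w1) (minpoly_root_unimodular i)).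
  by have := @papply_return q; under eq_fun do rewrite (iter_Jordan_chain Sv Sw1).
move: w2_neq0; rewrite -/w2 -[w2](scale1r) -(mulfV l_neq0) -scalerA.
by rewrite v0 scaler0 eqxx.
Qed.

Lemma minpoly_span_eigen : spanS (EigC S) y.
Proof.
have [S0 [_ SZ]] := spanS_subspace (EigC S).
have [n0 | n_gt0] := posnP n.
  suff -> : y = 0 by [].
  by rewrite -(papply1 S y) -Pi_y big1 // => k; have := ltn_ord k; rewrite {2}n0.
rewrite -(papply1 S y) (lagrange_partition1 n_gt0 minpoly_roots_inj) papply_sum.
apply: subspace_sum (spanS_subspace _) _ => k _; rewrite papplyZ; apply/SZ/spanS_mem.
have [w_neq0 Sw] := minpoly_cofactor_eigen (bigD1 k isT).
by split => //; exists (lam k); split => //; exact: minpoly_root_unimodular.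
Qed.

End RecurrentSpectrum.

Theorem recurrent_finite_orbit_spanEigC (R : realType) (Y : topologicalLmodType R[i])
  (S : {linear Y -> Y}) (y : Y) : hausdorff_space Y -> continuous S ->
  recurrent S y -> finite_dim (spanS (range (fun n => iter n S y))) ->
  spanS (EigC S) y.
Proof.
move=> Y_haus S_cont y_rec /orbit_minpoly [p [p_neq0 py p_min]].
have [rs p_rs] := closed_field_poly_normal p.
have lp_neq0 : lead_coef p != 0 by rewrite lead_coef_eq0.
have Pi_p : \prod_(k < size rs) ('X - (rs`_k)%:P) = (lead_coef p)^-1 *: p.
  by rewrite {2}p_rs scalerA mulVf // scale1r (big_nth 0) big_mkord.
apply: (minpoly_span_eigen Y_haus S_cont y_rec (lam := fun k : 'I_(size rs) => rs`_k)).
  by rewrite Pi_p papplyZ py scaler0.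
by rewrite Pi_p size_scale ?invr_eq0.
Qed.

Section Complexification.
Variables (R : realType) (X : topologicalLmodType R).
Local Notation C := R[i].
Local Notation Re := complex.Re.
Local Notation Im := complex.Im.

(* The pair (y1, y2) stands for y1 + i y2. *)
Definition cplx : Type := (X * X)%type.
HB.instance Definition _ := GRing.Zmodule.on cplx.
HB.instance Definition _ := Topological.on cplx.

Definition cplx_scale (mu : C) (y : cplx) : cplx :=
  (Re mu *: y.1 - Im mu *: y.2, Re mu *: y.2 + Im mu *: y.1).

Lemma cplx_scaleA a b y : cplx_scale a (cplx_scale b y) = cplx_scale (a * b) y.
Proof.
case: a b y => [ar ai] [br bi] [y1 y2]; rewrite /cplx_scale /=.
by congr pair; rewrite scalerBr scalerDr !scalerA scalerBl scalerDl ?opprD;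
  rewrite [LHS](AC (2*2) ((1*4)*(2*3))).
Qed.

Lemma cplx_scale1 : left_id 1 cplx_scale.
Proof. by case=> y1 y2; rewrite /cplx_scale /= !scale1r !scale0r subr0 addr0. Qed.

Lemma cplx_scaleDr : right_distributive cplx_scale +%R.
Proof.
by move=> a [y1 y2] [z1 z2]; rewrite /cplx_scale /=; congr pair;
  rewrite !scalerDr ?opprD addrACA.
Qed.

Lemma cplx_scaleDl y : {morph cplx_scale^~ y : a b / a + b}.
Proof.
by move=> [ar ai] [br bi]; rewrite /cplx_scale /=; congr pair;
  rewrite !scalerDl ?opprD addrACA.
Qed.

HB.instance Definition _ := GRing.Zmodule_isLmodule.Build C cplx
  cplx_scaleA cplx_scale1 cplx_scaleDr cplx_scaleDl.

Lemma cplx_scaleE (mu : C) (y : cplx) : mu *: y = cplx_scale mu y.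
Proof. by []. Qed.

Lemma cplx_sub_continuous : continuous (fun z : cplx * cplx => z.1 - z.2).
Proof.
move=> z; apply: cvg_pair; apply: tmod_cvgB;
  by [apply: cvg_comp cvg_fst cvg_fst | apply: cvg_comp cvg_snd cvg_fst
     | apply: cvg_comp cvg_fst cvg_snd | apply: cvg_comp cvg_snd cvg_snd].
Qed.

HB.instance Definition _ :=
  PreTopologicalNmodule_isTopologicalZmodule.Build cplx cplx_sub_continuous.

Lemma cplx_scale_continuous : continuous (fun z : C^o * cplx => z.1 *: z.2).
Proof.
move=> z; apply: cvg_pair; [apply: tmod_cvgB | apply: tmod_cvgD];
  apply: tmod_cvgZ; apply: cvg_comp cvg_fst _ || apply: cvg_comp cvg_snd _;
  by [exact: Re_continuous | exact: Im_continuous | exact: cvg_fst | exact: cvg_snd].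
Qed.

HB.instance Definition _ :=
  TopologicalZmodule_isTopologicalLmodule.Build C cplx cplx_scale_continuous.

Lemma cplx_hausdorff : hausdorff_space X -> hausdorff_space cplx.
Proof.
move=> X_haus [p1 p2] [q1 q2] pq.
have nbhsX (x1 x2 : X) A1 A2 :
    nbhs x1 A1 -> nbhs x2 A2 -> nbhs ((x1, x2) : cplx) (A1 `*` A2).
  by move=> xA1 xA2; exists (A1, A2).
congr pair; apply: X_haus => A B pA qB.
  have [[z1 z2] [[Az _] [Bz _]]] :=
    pq _ _ (nbhsX _ _ _ _ pA filterT) (nbhsX _ _ _ _ qB filterT).
  by exists z1.
have [[z1 z2] [[_ Az] [_ Bz]]] :=
  pq _ _ (nbhsX _ _ _ _ filterT pA) (nbhsX _ _ _ _ filterT qB).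
by exists z2.
Qed.

Section ComplexifiedOperator.
Variable T : {linear X -> X}.

Definition cplx_op (y : cplx) : cplx := (T y.1, T y.2).

Lemma cplx_op_linear : linear cplx_op.
Proof.
move=> a [u1 u2] [v1 v2]; rewrite /cplx_op /= [a *: _]cplx_scaleE /cplx_scale /=.
by congr pair; rewrite /= !(raddfD T) ?(raddfN T); congr (_ + _ + _);
  rewrite ?(raddfN T); try congr (- _); exact: linearZZ.
Qed.

HB.instance Definition _ := GRing.isLinear.Build C cplx cplx *:%R cplx_op cplx_op_linear.

Lemma cplx_op_continuous : continuous T -> continuous cplx_op.
Proof.
move=> Tc [y1 y2]; apply: cvg_pair.
  exact: (cvg_comp _ _ (@cvg_fst X X (nbhs y1) (nbhs y2) _) (Tc y1)).
exact: (cvg_comp _ _ (@cvg_snd X X (nbhs y1) (nbhs y2) _) (Tc y2)).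
Qed.

End ComplexifiedOperator.

End Complexification.

Section ComplexificationTransfer.
Variables (R : realType) (X : topologicalLmodType R) (T : {linear X -> X}).
Local Notation Re := complex.Re.
Local Notation Im := complex.Im.
Local Open Scope complex_scope.

Let embed_semiconj (z : X) : ((T z, 0) : cplx X) = cplx_op T (z, 0).
Proof. by rewrite /cplx_op /= linear0. Qed.

Lemma cplx_recurrent x : recurrent T x -> recurrent (cplx_op T) ((x, 0) : cplx X).
Proof.
apply: recurrent_semiconj embed_semiconj => z.
by apply: cvg_pair; [exact: cvg_id | exact: cvg_cst].
Qed.

Lemma cplx_span_embed m (v : 'I_m -> X) y : spanS (range v) y ->
  spanS (range (fun k => (v k, 0) : cplx X)) (y, 0).
Proof.
move=> /spanS_range [a ->]; exists m, (fun k => (a k)%:C), (fun k => (v k, 0)).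
split=> [k|]; first by exists k.
elim/big_rec2: _ => // k w z _ <-; rewrite cplx_scaleE /cplx_scale /=.
by congr pair; rewrite /= ?scaler0 ?scale0r ?subr0 ?addr0.
Qed.

Lemma cplx_finite_orbit x : finite_dim (spanS (range (fun n => iter n T x))) ->
  finite_dim (spanS (range (fun n => iter n (cplx_op T) ((x, 0) : cplx X)))).
Proof.
move=> [m [v orbit_v]]; exists m, (fun k => (v k, 0)).
apply: spanS_sub; first exact: spanS_subspace.
move=> _ [n _ <-]; rewrite -(iter_semiconj _ _ embed_semiconj).
by apply/cplx_span_embed/orbit_v/spanS_mem; exists n.
Qed.

Lemma cplx_eigen_parts (w : cplx X) :
  EigC (cplx_op T) w -> EigR T w.1 /\ EigR T w.2.
Proof.
move=> [w_neq0 [l [l1 Tw]]]; move: Tw; rewrite cplx_scaleE.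
case: w w_neq0 => w1 w2 w_neq0 [/= Tw1 Tw2].
have ab1 : Re l ^+ 2 + Im l ^+ 2 = 1.
  by apply: (@complexI R); rewrite add_Re2_Im2 l1 expr1n.
have w12 : w1 != 0 \/ w2 != 0.
  case: (eqVneq w1 0) => [w10|]; last by left.
  by right; apply: contraNneq w_neq0 => w20; rewrite w10 w20.
split; first by exists w2, (Re l), (Im l).
exists (- w1), (Re l), (Im l); split=> //; split.
  by case: w12 => ?; [right; rewrite oppr_eq0 | left].
split; first by rewrite Tw2 scalerN opprK.
by rewrite linearN Tw1 opprB addrC scalerN.
Qed.

Lemma cplx_span_parts : spanS (EigC (cplx_op T)) `<=`
  [set w : cplx X | spanS (EigR T) w.1 /\ spanS (EigR T) w.2].
Proof.
have [E0 [ED EZ]] := spanS_subspace (EigR T).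
apply: spanS_sub => [|w /cplx_eigen_parts [E1 E2]]; last by split; exact: spanS_mem.
split; first by split; exact: E0.
split=> [[a1 a2] [b1 b2] [Ea1 Ea2] [Eb1 Eb2] | mu [a1 a2] [Ea1 Ea2]].
  by split; apply: ED.
by rewrite cplx_scaleE; split; apply: ED; rewrite -?scaleNr; exact: EZ.
Qed.

End ComplexificationTransfer.

Theorem recurrent_finite_orbit_spanEigR (R : realType) (X : topologicalLmodType R)
  (T : {linear X -> X}) (x : X) : hausdorff_space X -> continuous T ->
  recurrent T x -> finite_dim (spanS (range (fun n => iter n T x))) ->
  spanS (EigR T) x.
Proof.
move=> X_haus Tc x_rec x_fin.
suff /cplx_span_parts [] : spanS (EigC (cplx_op T)) ((x, 0) : cplx X) by [].
apply: recurrent_finite_orbit_spanEigC.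
- exact: cplx_hausdorff.
- exact: cplx_op_continuous.
- exact: cplx_recurrent.
- exact: cplx_finite_orbit.
Qed.

Section EigenSpanOrbit.
Variables (K : numDomainType) (X : lmodType K) (T : {linear X -> X}).

Lemma invariant_span_finite_orbit m (u : 'I_m -> X) x :
  (forall i, spanS (range u) (T (u i))) -> spanS (range u) x ->
  finite_dim (spanS (range (fun n => iter n T x))).
Proof.
move=> Tu ux; exists m, u; have U_sub := spanS_subspace (range u).
have [_ [_ UZ]] := U_sub.
have TU y : spanS (range u) y -> spanS (range u) (T y).
  move=> [n [c [w [uw ->]]]]; rewrite linear_sum; apply: subspace_sum => // i _.
  by rewrite linearZZ; apply: UZ; have [k _ <-] := uw i; exact: Tu.
apply: spanS_sub => // _ [n _ <-]; elim: n => [|n IH] //=; exact: TU.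
Qed.

End EigenSpanOrbit.

Lemma spanEigC_finite_orbit (R : realType) (X : lmodType R[i])
  (T : {linear X -> X}) x :
  spanS (EigC T) x -> finite_dim (spanS (range (fun n => iter n T x))).
Proof.
move=> [m [c [v [Ev ->]]]]; have [_ [_ UZ]] := spanS_subspace (range v).
apply: (invariant_span_finite_orbit (u := v)) => [i|].
  by have [_ [l [_ ->]]] := Ev i; apply/UZ/spanS_mem; exists i.
by apply: subspace_sum (spanS_subspace _) _ => i _; apply/UZ/spanS_mem; exists i.
Qed.

Lemma spanEigR_finite_orbit (R : realType) (X : lmodType R)
  (T : {linear X -> X}) x :
  spanS (EigR T) x -> finite_dim (spanS (range (fun n => iter n T x))).
Proof.
move=> [m [c [v [Ev ->]]]].
have /choice [y Ey] : forall i, exists y, exists a b : R,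
    T (v i) = a *: v i - b *: y /\ T y = a *: y + b *: v i.
  by move=> i; have [y [a [b [_ [_ Tvy]]]]] := Ev i; exists y, a, b.
pose u := catf v y; have [_ [UD UZ]] := spanS_subspace (range u).
have Uv i : spanS (range u) (v i).
  by apply: spanS_mem; exists (lshift m i) => //; exact: catf_lshift.
have Uy i : spanS (range u) (y i).
  by apply: spanS_mem; exists (rshift m i) => //; exact: catf_rshift.
apply: (invariant_span_finite_orbit (u := u)) => [k|].
  rewrite /u /catf; case: (fintype.split k) => i; have [a [b [Tv Ty]]] := Ey i;
    by rewrite ?Tv ?Ty; apply: UD; rewrite -?scaleNr; exact: UZ.
by apply: subspace_sum (spanS_subspace _) _ => i _; exact: UZ.
Qed.

Lemma iter_opN (X : topologicalType) N (f : X -> X) n (z : {ptws 'I_N -> X}) i :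
  iter n (opN N f) z i = iter n f (z i).
Proof. by elim: n => [|n IH] //=; rewrite /opN IH. Qed.

Section CyclicSubspace.
Variables (K : numFieldType) (X : topologicalLmodType K) (T : {linear X -> X}) (y : X).

Definition cyclic_subspace : set X := [set papply T q y | q in [set: {poly K}]].

Lemma cyclic_subspaceP : Defs.subspace cyclic_subspace.
Proof.
split; first by exists 0; rewrite ?papply0.
split=> [_ _ [p _ <-] [q _ <-] | a _ [q _ <-]].
  by exists (p + q); rewrite ?papplyD.
by exists (a *: q); rewrite ?papplyZ.
Qed.

Lemma cyclic_subspace_invariant : T @` cyclic_subspace `<=` cyclic_subspace.
Proof. by move=> _ [_ [q _ <-] <-]; exists ('X * q); rewrite ?papplyXM. Qed.

Lemma cyclic_subspace_finite_dim :
  finite_dim cyclic_subspace -> finite_dim (spanS (range (fun n => iter n T y))).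
Proof.
move=> [m [v Zv]]; exists m, v; apply: subset_trans Zv.
apply: spanS_sub; first exact: cyclic_subspaceP.
by move=> _ [n _ <-]; exists ('X^n * 1); rewrite ?papplyXnM ?papply1.
Qed.

Lemma FRec_cyclic_subspace (F : set (set nat)) N : continuous T ->
  furstenberg F -> FRec F T y ->
  [set z : {ptws 'I_N -> X} | forall i, cyclic_subspace (z i)] `<=` FRec F (opN N T).
Proof.
move=> Tc [_ [F_up _]] yF z Zz.
have /choice [q qz] : forall i, exists q, papply T q y = z i.
  by move=> i; have [q _ qz] := Zz i; exists q.
pose Phi (x : X) : {ptws 'I_N -> X} := fun i => papply T (q i) x.
have Phi_y : Phi y = z by apply/funext => i; exact: qz.
have Phi_cvg : Phi @ y --> z.
  by rewrite -Phi_y; apply: ptws_cvg => i; exact: papply_continuous.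
move=> U /Phi_cvg /yF /F_up; apply => n /=.
have -> // : iter n (opN N T) z = Phi (iter n T y).
by apply/funext => i; rewrite iter_opN -qz -papply_iter.
Qed.

End CyclicSubspace.

Lemma Fspace_hausdorff (R : realType) (K : numFieldType) (X : topologicalLmodType K) :
  Fspace R X -> hausdorff_space X.
Proof.
move=> [d [d_ge0 [d_eq0 [d_sym [d_tri [_ [d_nbhs _]]]]]]] p q pq.
apply: contrapT => /eqP p_neq_q.
have dpq : 0 < d p q.
  by rewrite lt_def d_ge0 andbT; apply: contra p_neq_q => /eqP /d_eq0 ->.
have ball_nbhs (x : X) : nbhs x [set z | d x z < d p q / 2].
  by apply/d_nbhs; exists (d p q / 2) => //; rewrite divr_gt0.
have [z [/= pz qz]] := pq _ _ (ball_nbhs p) (ball_nbhs q).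
have := d_tri p z q; rewrite (d_sym z q) => /le_lt_trans /(_ (ltrD pz qz)).
by rewrite -splitr ltxx.
Qed.

Lemma thm15_conclusion_of_criterion (K : numFieldType) (X : topologicalLmodType K)
  (T : {linear X -> X}) (E : set X) : continuous T ->
  (forall x, recurrent T x ->
     spanS E x <-> finite_dim (spanS (range (fun n => iter n T x)))) ->
  thm15_conclusion T E.
Proof.
move=> Tc criterion; split=> // F F_furst [y [yF yE]].
exists (cyclic_subspace T y); split; first exact: cyclic_subspaceP.
split; first exact: cyclic_subspace_invariant.
split; last by move=> N _; exact: FRec_cyclic_subspace.
move=> /cyclic_subspace_finite_dim y_fin; apply: yE.
by apply/(criterion y (FRec_recurrent F_furst yF)).
Qed.

Theorem mainTheorem15 :
  (* real F-spaces *)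
  (forall (R : realType) (X : topologicalLmodType R) (T : {linear X -> X}),
      continuous T -> Fspace R X -> separable X -> ~ finite_dim [set: X] ->
      thm15_conclusion T (EigR T)) /\
  (* complex F-spaces *)
  (forall (R : realType) (X : topologicalLmodType R[i]) (T : {linear X -> X}),
      continuous T -> Fspace R X -> separable X -> ~ finite_dim [set: X] ->
      thm15_conclusion T (EigC T)).
Proof.
split=> R X T Tc /Fspace_hausdorff X_haus _ _.
  apply: thm15_conclusion_of_criterion => // x x_rec.
  split; [exact: spanEigR_finite_orbit | exact: recurrent_finite_orbit_spanEigR].
apply: thm15_conclusion_of_criterion => // x x_rec.
split; [exact: spanEigC_finite_orbit | exact: recurrent_finite_orbit_spanEigC].
Qed.
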